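(* Let $X\subset\mathbb{R}^n$ be a nonempty compact convex set with diameter $D_X:=\max_{x,y\in X}\|x-y\|$ (Euclidean norm). Let $u\in X$, $g\in\mathbb{R}^n$, $\beta>0$, $\eta>0$, $\phi(x):=\langle g,x\rangle+\frac{\beta}{2}\|x-u\|^2$, and consider the ACGM procedure described in the context. Then, if the procedure terminates with output $u^+$, $$\max_{x\in X}\langle\nabla\phi(u^+),u^+-x\rangle\le\eta .$$ Moreover, if $\delta^t=\sigma\beta D_X^2/t$ for some $\sigma\ge0$ and $\alpha^t$ is chosen such that $$\phi(u^t)\le\phi\Big(\frac{t-1}{t+1}u^{t-1}+\frac{2}{t+1}v^t\Big)$$ for every $t$, then for any $t\ge1$ (for which $v^{t+1}$ is computed) $$\min_{j=1,\dots,t+1}\langle\nabla\phi(u^{j-1}),u^{j-1}-v^j\rangle\le\min_{j=1,\dots,t+1}\max_{x\in X}\langle\nabla\phi(u^{j-1}),u^{j-1}-x\rangle\le\frac{6(\sigma+1)\beta D_X^2}{t},$$ and the ACGM procedure terminates after at most $T:=1+\big\lceil (7\sigma+6)\beta D_X^2/\eta\big\rceil$ iterations.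
   Context: Note $\nabla\phi(x)=g+\beta(x-u)$. ACGM (approximate conditional gradient method) procedure for $\min_{x\in X}\phi(x)$, with input $u,g,\beta,\eta$ and a sequence of tolerances $\delta^t\ge0$: set $u^0:=u$. For $t=1,2,\dots$ (iteration $t$): compute $v^t\in X$ such that $\langle\nabla\phi(u^{t-1}),v^t-x\rangle\le\delta^t$ for all $x\in X$ (an approximate solution of the linear subproblem $\min_{x\in X}\langle\nabla\phi(u^{t-1}),x\rangle$). If $\langle\nabla\phi(u^{t-1}),u^{t-1}-v^t\rangle\le\eta-\delta^t$, stop and output $u^+:=u^{t-1}$. Otherwise set $u^t:=(1-\alpha^t)u^{t-1}+\alpha^t v^t$ with some step size $\alpha^t\in[0,1]$, and continue. *)

From HB Require Import structures.
From mathcomp Require Import all_boot all_order all_algebra.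
From mathcomp Require Import all_classical all_reals all_analysis.
Set Implicit Arguments. Unset Strict Implicit. Unset Printing Implicit Defensive.
Import Order.TTheory GRing.Theory Num.Theory.
Import numFieldNormedType.Exports.
Local Open Scope classical_set_scope.
Local Open Scope ring_scope.

Section ACGM.
Variables (R : realType) (n : nat).
Implicit Types (x y : 'rV[R]_n) (X : set 'rV[R]_n).

Definition dot x y : R := \sum_(i < n) x ord0 i * y ord0 i.
Definition enorm x : R := Num.sqrt (dot x x).

(* diameter D_X := max_{x,y in X} ||x - y|| (a max, attained for compact X) *)
Definition diam X : R :=
  sup [set r | exists x y, [/\ X x, X y & r = enorm (x - y)]].

Definition phi (u g : 'rV[R]_n) (beta : R) x : R :=
  dot g x + beta / 2 * enorm (x - u) ^+ 2.
Definition gradphi (u g : 'rV[R]_n) (beta : R) x : 'rV[R]_n :=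
  g + beta *: (x - u).

Definition maxgap X (d w : 'rV[R]_n) : R :=
  sup [set dot d (w - x) | x in X].

(* quantity tested in the stopping rule at iteration t >= 1 *)
Definition acgm_gap u g beta (uu vv : nat -> 'rV[R]_n) (t : nat) : R :=
  dot (gradphi u g beta (uu t.-1)) (uu t.-1 - vv t).

Definition acgm_stops u g beta eta (de : nat -> R) uu vv (t : nat) : Prop :=
  acgm_gap u g beta uu vv t <= eta - de t.

Definition acgm_reached u g beta eta de uu vv (t : nat) : Prop :=
  (1 <= t)%N /\ forall s, (1 <= s)%N -> (s < t)%N -> ~ acgm_stops u g beta eta de uu vv s.

Definition acgm_run X u g beta eta (de al : nat -> R) (uu vv : nat -> 'rV[R]_n) : Prop :=
  [/\ uu 0%N = u,
      forall t, (1 <= t)%N -> 0 <= de t,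
      forall t, acgm_reached u g beta eta de uu vv t ->
        X (vv t) /\
        forall x, X x -> dot (gradphi u g beta (uu t.-1)) (vv t - x) <= de t
    & forall t, acgm_reached u g beta eta de uu vv t ->
        ~ acgm_stops u g beta eta de uu vv t ->
        [/\ 0 <= al t, al t <= 1 &
            uu t = (1 - al t) *: uu t.-1 + al t *: vv t]].

End ACGM.

(** At iteration j the inexact linear oracle gives
    <grad phi(u^{j-1}), u^{j-1} - x> <= gap_j + delta_j for every x in X, so the
    stopping test certifies a Frank-Wolfe gap of at most eta.  The exact quadratic
    expansion of phi turns the step-size rule into the descent inequality
    h_j <= h_{j-1} - 2/(j+1) gap_j + 2 beta D^2/(j+1)^2 for the excess
    h_j = phi(u^j) - phi(x), x in X, while the same expansion gives
    h_{j-1} <= gap_j + delta_j; together they yield h_j <= 2(sigma+1) beta D^2/(j+1).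
    If every gap in the window t/2 < j <= t exceeded M, summing the descent
    inequality over the window with x = u^t (so that h_t = 0) would contradict this
    bound as soon as M t >= 6(sigma+1) beta D^2.  M = 6(sigma+1) beta D^2/t gives the
    rate, and M = eta gives termination. *)

From HB Require Import structures.
From mathcomp Require Import all_boot all_order all_algebra.
From mathcomp Require Import all_classical all_reals all_analysis.
From mathcomp Require Import ring lra zify.
Set Implicit Arguments. Unset Strict Implicit. Unset Printing Implicit Defensive.
Import Order.TTheory GRing.Theory Num.Theory.
Import numFieldNormedType.Exports.
Local Open Scope classical_set_scope.
Local Open Scope ring_scope.

Section Euclidean.
Variables (R : realType) (n : nat).
Implicit Types (x y d v w : 'rV[R]_n) (X : set 'rV[R]_n).

Lemma dot_self_ge0 x : 0 <= dot x x.
Proof. by apply: sumr_ge0 => i _; rewrite -expr2 sqr_ge0. Qed.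

Lemma dot0r d : dot d 0 = 0.
Proof. by rewrite /dot big1 // => i _; rewrite mxE mulr0. Qed.

Lemma dot_self_eq0 x : (dot x x == 0) = (x == 0).
Proof.
apply/idP/idP => [/eqP x0|/eqP ->]; last by rewrite dot0r.
apply/eqP/rowP => i; rewrite mxE.
have /eqP : x ord0 i * x ord0 i = 0.
  by apply: (psumr_eq0P _ x0) => // j _; rewrite -expr2 sqr_ge0.
by rewrite mulf_eq0 orbb => /eqP.
Qed.

Lemma enorm_sqr x : enorm x ^+ 2 = dot x x.
Proof. by rewrite /enorm sqr_sqrtr // dot_self_ge0. Qed.

Lemma dot_splitr d w v x : dot d (w - x) = dot d (w - v) + dot d (v - x).
Proof. by rewrite /dot -big_split; apply: eq_bigr => i _; rewrite /= !mxE; ring. Qed.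

Lemma dot_self_le_mx_norm x : dot x x <= n%:R * `|x| ^+ 2.
Proof.
rewrite -[n in n%:R]card_ord mulr_natl -sumr_const; apply: ler_sum => i _.
rewrite -expr2 -real_normK ?num_real // lerXn2r ?nnegrE //.
by rewrite [leRHS]/Num.norm /= mx_normrE; apply/bigmax_geP; right; exists (ord0, i).
Qed.

Lemma enorm_le_diam X x y : compact X -> X x -> X y -> enorm (x - y) <= diam X.
Proof.
move=> /compact_bounded[M [_ XM]] Xx Xy.
have {}XM z : X z -> `|z| <= M + 1 by apply: XM; rewrite ltrDl.
apply: ub_le_sup; last by exists x, y.
exists (Num.sqrt (n%:R * (2 * (M + 1)) ^+ 2)) => _ [a [b [Xa Xb ->]]].
have M1_ge0 : 0 <= M + 1 := le_trans (normr_ge0 _) (XM _ Xa).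
rewrite /enorm ler_sqrt ?mulr_ge0 ?sqr_ge0 //.
apply: le_trans (dot_self_le_mx_norm _) _; rewrite ler_wpM2l // lerXn2r ?nnegrE //.
- exact: mulr_ge0.
- by rewrite mulr2n mulrDl mul1r (le_trans (ler_normB _ _)) // lerD ?XM.
Qed.

Lemma dot_le_diam2 X x y : compact X -> X x -> X y ->
  dot (x - y) (x - y) <= diam X ^+ 2.
Proof.
move=> cX Xx Xy; have le_diam := enorm_le_diam cX Xx Xy.
have enorm_ge0 : 0 <= enorm (x - y) := sqrtr_ge0 _.
by rewrite -enorm_sqr lerXn2r ?nnegrE // (le_trans enorm_ge0).
Qed.

Lemma maxgap_le X d w b : X !=set0 ->
  (forall x, X x -> dot d (w - x) <= b) -> maxgap X d w <= b.
Proof.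
move=> [x0 X0] le_b; apply: ge_sup; first by exists (dot d (w - x0)), x0.
by move=> _ [x Xx <-]; apply: le_b.
Qed.

Lemma le_maxgap X d w b x : (forall y, X y -> dot d (w - y) <= b) ->
  X x -> dot d (w - x) <= maxgap X d w.
Proof.
move=> le_b Xx; apply: ub_le_sup; last by exists x.
by exists b => _ [y Xy <-]; apply: le_b.
Qed.

Lemma convex_set_lerp X v w a : convex_set X -> X v -> X w ->
  0 <= a -> a <= 1 -> X ((1 - a) *: v + a *: w).
Proof.
move=> cX Xv Xw a0 a1.
by have := cX w v (Itv01 a0 a1) (mem_set Xw) (mem_set Xv); rewrite inE addrC.
Qed.

End Euclidean.

Section Quadratic.
Variables (R : realType) (n : nat) (u g : 'rV[R]_n) (beta : R).
Implicit Types (x y v w : 'rV[R]_n).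

Lemma dot_gradphi x y : dot (gradphi u g beta y) (y - x) =
  phi u g beta y - phi u g beta x + beta / 2 * dot (x - y) (x - y).
Proof.
rewrite /phi !enorm_sqr /gradphi /dot !mulr_sumr -!big_split /= -sumrN -!big_split /=.
by apply: eq_bigr => i _; rewrite !mxE; field.
Qed.

Lemma phi_lerp b v w : phi u g beta ((1 - b) *: v + b *: w) =
  phi u g beta v - b * dot (gradphi u g beta v) (v - w)
  + beta / 2 * b ^+ 2 * dot (w - v) (w - v).
Proof.
rewrite /phi !enorm_sqr /gradphi /dot !mulr_sumr -!big_split /= -sumrN -!big_split /=.
by apply: eq_bigr => i _; rewrite !mxE; field.
Qed.

End Quadratic.

Section RateArithmetic.
Variables (R : realType) (C s : R).
Hypotheses (C_ge0 : 0 <= C) (s_ge0 : 0 <= s).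

Lemma rate_step (J h h' gp : R) : 1 <= J ->
  (J = 1 \/ h' <= 2 * (s + 1) * C / J) ->
  h <= h' - 2 / (J + 1) * gp + 2 * C / (J + 1) ^+ 2 -> h' <= gp + s * C / J ->
  h <= 2 * (s + 1) * C / (J + 1).
Proof.
move=> J_ge1 IH descent gap_ge.
have J_neq0 : J != 0 by rewrite gt_eqF // (lt_le_trans ltr01).
have J1_neq0 : J + 1 != 0 by rewrite gt_eqF //; lra.
have w_ge0 : 0 <= 2 / (J + 1) by rewrite divr_ge0 //; lra.
have w_le1 : 2 / (J + 1) <= 1 by rewrite ler_pdivrMr; lra.
have := ler_wpM2l w_ge0 gap_ge.
have : (1 - 2 / (J + 1)) * h' <= (1 - 2 / (J + 1)) * (2 * (s + 1) * C / J).
  case: IH => [J1|IH]; last by apply: ler_wpM2l; rewrite // subr_ge0.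
  have -> : 1 - 2 / (J + 1) = 0 by rewrite J1; field.
  by rewrite !mul0r.
have -> : (1 - 2 / (J + 1)) * (2 * (s + 1) * C / J) =
    2 * (s + 1) * C / (J + 1) - 2 / (J + 1) * (s * C / J) - 2 * C / (J + 1) ^+ 2
    - 2 * C / (J * (J + 1) ^+ 2).
  by field; rewrite J_neq0 J1_neq0.
have : 0 <= 2 * C / (J * (J + 1) ^+ 2).
  by rewrite divr_ge0 ?mulr_ge0 ?sqr_ge0 //; lra.
lra.
Qed.

Lemma descent_rate (h gp : nat -> R) t :
  (forall j, (0 < j <= t)%N ->
     h j <= h j.-1 - 2 / (j%:R + 1) * gp j + 2 * C / (j%:R + 1) ^+ 2) ->
  (forall j, (0 < j <= t)%N -> h j.-1 <= gp j + s * C / j%:R) ->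
  forall j, (0 < j <= t)%N -> h j <= 2 * (s + 1) * C / (j%:R + 1).
Proof.
move=> descent gap_ge; elim=> [//|j IH] /andP[_ jt].
have jt' : (0 < j.+1 <= t)%N by rewrite jt.
apply: rate_step (descent _ jt') (gap_ge _ jt'); first by rewrite ler1n.
case: j IH jt {jt'} => [|j] IH jt; first by left.
by right; rewrite -[j.+2%:R]natr1; exact: IH (ltnW jt).
Qed.

Lemma potential_step (J T h h' gp M : R) : 1 <= J -> J <= T -> 0 <= M ->
  h <= h' - 2 / (J + 1) * gp + 2 * C / (J + 1) ^+ 2 -> M < gp + s * C / J ->
  h + 2 * (s + 1) * C / (J + 1) + 2 * M * J / (T + 1) <
  h' + 2 * (s + 1) * C / J + 2 * M * (J - 1) / (T + 1).
Proof.
move=> J_ge1 JT M_ge0 descent gap_gt.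
have J_neq0 : J != 0 by rewrite gt_eqF // (lt_le_trans ltr01).
have J1_neq0 : J + 1 != 0 by rewrite gt_eqF //; lra.
have T1_neq0 : T + 1 != 0 by rewrite gt_eqF //; lra.
have w_gt0 : 0 < 2 / (J + 1) by rewrite divr_gt0 //; lra.
have := gap_gt; rewrite -(ltr_pM2l w_gt0) mulrDr.
have : 2 * M / (T + 1) <= 2 / (J + 1) * M.
  rewrite [leRHS]mulrAC; apply: ler_wpM2l; first exact: mulr_ge0.
  by rewrite lef_pV2 ?posrE; lra.
have -> : 2 * M * J / (T + 1) = 2 * M * (J - 1) / (T + 1) + 2 * M / (T + 1).
  by field.
have -> : 2 * (s + 1) * C / J = 2 * (s + 1) * C / (J + 1) + 2 / (J + 1) * (s * C / J)
    + 2 * C / (J + 1) ^+ 2 + 2 * C / (J * (J + 1) ^+ 2).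
  by field; rewrite J_neq0 J1_neq0.
have : 0 <= 2 * C / (J * (J + 1) ^+ 2).
  by rewrite divr_ge0 ?mulr_ge0 ?sqr_ge0 //; lra.
lra.
Qed.

Lemma lt_of_decreasing_window (f : nat -> R) k t : (k < t)%N ->
  (forall j, (k < j <= t)%N -> f j < f j.-1) -> f t < f k.
Proof.
elim: t => // t IH; rewrite ltnS leq_eqVlt => /orP[/eqP <-|kt] decr.
  by apply: decr; rewrite ltnSn.
apply: lt_trans (decr t.+1 _) (IH kt _); first lia.
by move=> j jt; apply: decr; lia.
Qed.

Lemma small_gap_window (h gp : nat -> R) t (M : R) : (2 <= t)%N -> 0 <= M ->
  6 * (s + 1) * C <= M * t%:R -> 0 <= h t ->
  (forall j, (0 < j <= t)%N ->
     h j <= h j.-1 - 2 / (j%:R + 1) * gp j + 2 * C / (j%:R + 1) ^+ 2) ->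
  (forall j, (0 < j <= t)%N -> h j.-1 <= gp j + s * C / j%:R) ->
  exists2 j, (t./2 < j <= t)%N & gp j + s * C / j%:R <= M.
Proof.
move=> t_ge2 M_ge0 Mt ht_ge0 descent gap_ge; set k := t./2.
have a_ge0 : 0 <= (s + 1) * C by rewrite mulr_ge0 // addr_ge0.
have tk : (k * 2 <= t <= k * 2 + 1)%N.
  by have := odd_double_half t; rewrite -/k -muln2; case: (odd t) => /= <-; lia.
have k_gt0 : (0 < k)%N by lia.
have kt : (k < t)%N by lia.
have hk := descent_rate descent gap_ge (j := k) ltac:(by rewrite k_gt0 ltnW).
case: (pselect (exists2 j, (k < j <= t)%N & gp j + s * C / j%:R <= M)) => // none.
exfalso.
have gap_gt j : (k < j <= t)%N -> M < gp j + s * C / j%:R.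
  by move=> jw; rewrite ltNge; apply/negP => le_M; apply: none; exists j.
(* A potential that strictly decreases across the window while all gaps exceed M. *)
pose psi j := h j + 2 * (s + 1) * C / (j%:R + 1) + 2 * M * j%:R / (t%:R + 1).
have : psi t < psi k.
  apply: lt_of_decreasing_window kt _ => -[//|i] /andP[ki it].
  have := potential_step _ _ M_ge0 (descent i.+1 it) (gap_gt _ _).
  rewrite /psi [i%:R + 1]natr1 (_ : i%:R = i.+1%:R - 1); last by rewrite -natr1 addrK.
  by apply; rewrite ?ler1n ?ler_nat ?ki.
have T1_gt0 : 0 < t%:R + 1 :> R by rewrite natr1 ltr0n.
have K_le : t%:R + 1 <= 2 * (k%:R + 1) :> R.
  by rewrite !natr1 -natrM ler_nat; lia.
have tk_ge0 : 0 <= 2 * (t%:R - k%:R) - t%:R :> R.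
  by rewrite subr_ge0 -natrB ?(ltnW kt) // -natrM ler_nat; lia.
have aK : 2 * (s + 1) * C / (k%:R + 1) <= 4 * (s + 1) * C / (t%:R + 1).
  rewrite ler_pdivrMr ?natr1 ?ltr0n // [leRHS]mulrAC -natr1 ler_pdivlMr //.
  by have := ler_wpM2l a_ge0 K_le; lra.
have : 0 <= (2 * M * (t%:R - k%:R) - 6 * (s + 1) * C) / (t%:R + 1).
  apply: divr_ge0; last exact: ltW.
  by have := mulr_ge0 M_ge0 tk_ge0; lra.
have -> : (2 * M * (t%:R - k%:R) - 6 * (s + 1) * C) / (t%:R + 1) =
    2 * M * t%:R / (t%:R + 1) - 2 * M * k%:R / (t%:R + 1)
    + 2 * (s + 1) * C / (t%:R + 1) - 8 * (s + 1) * C / (t%:R + 1).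
  by rewrite !mulrBl !mulrDl; ring.
rewrite /psi; lra.
Qed.

End RateArithmetic.

Section Reached.
Variables (R : realType) (n : nat) (u g : 'rV[R]_n) (beta eta : R).
Variables (de : nat -> R) (uu vv : nat -> 'rV[R]_n).

Local Notation reached := (acgm_reached u g beta eta de uu vv).
Local Notation stops := (acgm_stops u g beta eta de uu vv).

Lemma reached1 : reached 1.
Proof. by split=> // s s_gt0; rewrite ltnNge s_gt0. Qed.

Lemma reached_le t s : reached t -> (0 < s <= t)%N -> reached s.
Proof.
by move=> [_ run] /andP[s_gt0 st]; split=> // r r_gt0 rs; apply: run (leq_trans rs st).
Qed.

Lemma reached_succ t : reached t -> ~ stops t -> reached t.+1.
Proof.
move=> [t_gt0 run] no_stop; split=> // r r_gt0; rewrite ltnS leq_eqVlt.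
by case/orP=> [/eqP -> //|]; apply: run.
Qed.

Lemma reached_prev t j : reached t -> (0 < j < t)%N -> reached j /\ ~ stops j.
Proof.
move=> Rt /andP[j_gt0 jt]; split; last exact: Rt.2.
by apply: reached_le Rt _; rewrite j_gt0 ltnW.
Qed.

Lemma stops_or_reached T :
  (exists t, [/\ (0 < t <= T)%N, reached t & stops t]) \/ reached T.+1.
Proof.
elim: T => [|T [[t [tT Rt St]]|RT]].
- by right; exact: reached1.
- by left; exists t; split=> //; case/andP: tT => -> /leqW.
- have [St|no_stop] := pselect (stops T.+1); last by right; exact: reached_succ.
  by left; exists T.+1; split; rewrite ?leqnn.
Qed.

End Reached.

Lemma le_bigmin_nat_first d (T : orderType d) (F G : nat -> T) a b : (a < b)%N ->
  (forall i, (a <= i < b)%N -> (F i <= G i)%O) ->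
  (\big[Order.min/F a]_(a <= i < b) F i <= \big[Order.min/G a]_(a <= i < b) G i)%O.
Proof.
move=> ab FG; rewrite [X in (_ <= X)%O]big_seq; apply: le_bigmin => [|i].
  by apply: (bigmin_inf_seq _ a) (FG a _); rewrite ?mem_index_iota ?leqnn ?ab.
rewrite mem_index_iota => ai.
by apply: (bigmin_inf_seq _ i) (FG i ai); rewrite ?mem_index_iota.
Qed.

Section Run.
Variables (R : realType) (n : nat) (X : set 'rV[R]_n) (u g : 'rV[R]_n) (beta eta : R).
Variables (de al : nat -> R) (uu vv : nat -> 'rV[R]_n).
Hypotheses (X_neq0 : X !=set0) (X_compact : compact X) (X_convex : convex_set X).
Hypotheses (Xu : X u) (beta_gt0 : 0 < beta) (eta_gt0 : 0 < eta).
Hypothesis run : acgm_run X u g beta eta de al uu vv.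

Local Notation phi_ := (phi u g beta).
Local Notation reached := (acgm_reached u g beta eta de uu vv).
Local Notation stops := (acgm_stops u g beta eta de uu vv).
Local Notation gap := (acgm_gap u g beta uu vv).
Local Notation fwgap j := (maxgap X (gradphi u g beta (uu j.-1)) (uu j.-1)).

Lemma iterate_mem t : reached t -> X (uu t.-1).
Proof.
have [uu0 _ vvP uuE] := run.
elim: t => [[]//|[_ _|t IH Rt]]; first by rewrite /= uu0.
have [Rt1 no_stop] := reached_prev (j := t.+1) Rt (ltnSn t.+1).
have [a_ge0 a_le1 ->] := uuE _ Rt1 no_stop.
exact: convex_set_lerp (IH Rt1) (vvP _ Rt1).1 a_ge0 a_le1.
Qed.

Lemma dot_grad_le_gap j x : reached j -> X x ->
  dot (gradphi u g beta (uu j.-1)) (uu j.-1 - x) <= gap j + de j.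
Proof.
have [_ _ vvP _] := run; move=> Rj Xx.
by rewrite (dot_splitr _ _ (vv j)) lerD2l; apply: (vvP _ Rj).2.
Qed.

Lemma fwgap_le_gap j : reached j -> fwgap j <= gap j + de j.
Proof. by move=> Rj; apply: maxgap_le X_neq0 _ => x; apply: dot_grad_le_gap. Qed.

Lemma gap_le_fwgap j : reached j -> gap j <= fwgap j.
Proof.
have [_ _ vvP _] := run; move=> Rj; rewrite /acgm_gap.
by apply: le_maxgap (vvP _ Rj).1 => y; apply: dot_grad_le_gap.
Qed.

Lemma fwgap_le_eta_of_stops t : reached t -> stops t -> fwgap t <= eta.
Proof.
by move=> Rt; rewrite /acgm_stops => St; apply: le_trans (fwgap_le_gap Rt) _; lra.
Qed.

Lemma phi_sub_le_gap j x : reached j -> X x -> phi_ (uu j.-1) - phi_ x <= gap j + de j.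
Proof.
move=> Rj Xx; apply: le_trans (dot_grad_le_gap Rj Xx); rewrite dot_gradphi lerDl.
by rewrite mulr_ge0 ?dot_self_ge0 // divr_ge0 // ltW.
Qed.

Lemma gap_eq0_of_diam_eq0 j : diam X = 0 -> reached j -> gap j = 0.
Proof.
have [_ _ vvP _] := run; move=> D0 Rj.
have := dot_le_diam2 X_compact (iterate_mem Rj) (vvP _ Rj).1.
rewrite D0 expr0n /= => le0.
have /eqP D : uu j.-1 - vv j == 0 by rewrite -dot_self_eq0 eq_le le0 dot_self_ge0.
by rewrite /acgm_gap D dot0r.
Qed.

Lemma bigmin_gap_le_bigmin_fwgap t : reached t.+1 ->
  \big[Num.min/gap 1%N]_(1 <= j < t.+2) gap j
  <= \big[Num.min/maxgap X (gradphi u g beta (uu 0%N)) (uu 0%N)]_(1 <= j < t.+2) fwgap j.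
Proof.
move=> Rt; apply: le_bigmin_nat_first => // j /andP[j_gt0 jt].
by apply: gap_le_fwgap; apply: reached_le Rt _; rewrite j_gt0.
Qed.

Section Rate.
Variable sigma : R.
Hypothesis sigma_ge0 : 0 <= sigma.
Hypothesis de_eq : forall t, (1 <= t)%N -> de t = sigma * beta * diam X ^+ 2 / t%:R.
Hypothesis phi_step : forall t, reached t -> ~ stops t ->
  phi_ (uu t) <= phi_ ((t.-1%:R / t.+1%:R) *: uu t.-1 + (2 / t.+1%:R) *: vv t).

Local Notation C := (beta * diam X ^+ 2).

Let C_ge0 : 0 <= C. Proof. by rewrite mulr_ge0 ?sqr_ge0 ?ltW. Qed.

Let de_eqC j : (0 < j)%N -> de j = sigma * C / j%:R.
Proof. by move=> j_gt0; rewrite de_eq // mulrA. Qed.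

Lemma phi_sub_le_gap_sigma j x : reached j -> X x ->
  phi_ (uu j.-1) - phi_ x <= gap j + sigma * C / j%:R.
Proof. by move=> Rj Xx; rewrite -de_eqC ?Rj.1 //; apply: phi_sub_le_gap. Qed.

Lemma phi_descent j : reached j -> ~ stops j ->
  phi_ (uu j) <= phi_ (uu j.-1) - 2 / (j%:R + 1) * gap j + 2 * C / (j%:R + 1) ^+ 2.
Proof.
case: j => [[]//|j] Rj no_stop; have [_ _ vvP _] := run.
apply: le_trans (phi_step Rj no_stop) _.
have J1_neq0 : j.+1%:R + 1 != 0 :> R by rewrite natr1 pnatr_eq0.
have -> : j.+1.-1%:R / j.+2%:R = 1 - 2 / (j.+1%:R + 1) :> R.
  by rewrite -[j.+2%:R]natr1 -[j.+1%:R]natr1 /=; field; rewrite -natr1 in J1_neq0.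
rewrite -[j.+2%:R]natr1 phi_lerp lerD2l.
have := dot_le_diam2 X_compact (vvP _ Rj).1 (iterate_mem Rj).
rewrite (_ : 2 * C / _ = beta / 2 * (2 / (j.+1%:R + 1)) ^+ 2 * diam X ^+ 2); last by field.
by apply: ler_wpM2l; rewrite mulr_ge0 ?sqr_ge0 // divr_ge0 // ltW.
Qed.

Lemma fwgap2_le : reached 2 -> fwgap 2 <= 2 * (sigma + 1) * C.
Proof.
move=> R2; have [R1 no_stop1] := reached_prev (j := 1) R2 isT.
apply: maxgap_le X_neq0 _ => x Xx; rewrite dot_gradphi /=.
have beta2_ge0 : 0 <= beta / 2 by rewrite divr_ge0 // ltW.
have := ler_wpM2l beta2_ge0 (dot_le_diam2 X_compact Xx (iterate_mem R2 : X (uu 1))).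
have := phi_sub_le_gap_sigma R1 Xx; have := phi_descent R1 no_stop1.
rewrite divr1 (_ : 2 / (1 + 1) = 1 :> R); last by field.
rewrite (_ : 2 * C / (1 + 1) ^+ 2 = C / 2); last by field.
by have := mulr_ge0 sigma_ge0 C_ge0; have := C_ge0; lra.
Qed.

Lemma small_gap t M : reached t.+1 -> (2 <= t)%N -> 0 <= M ->
  6 * (sigma + 1) * C <= M * t%:R ->
  exists2 j, (t./2 < j <= t)%N & gap j + sigma * C / j%:R <= M.
Proof.
move=> Rt t_ge2 M_ge0 Mt.
(* Measuring the excess against the last iterate u^t avoids any minimiser of phi. *)
have := small_gap_window C_ge0 sigma_ge0
  (h := fun j => phi_ (uu j) - phi_ (uu t)) (gp := gap) t_ge2 M_ge0 Mt.
apply; first by rewrite subrr.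
- move=> j jt; have [Rj no_stop] := reached_prev Rt jt.
  by have := phi_descent Rj no_stop; lra.
- move=> j jt; apply: phi_sub_le_gap_sigma (iterate_mem Rt).
  by have [] := reached_prev Rt jt.
Qed.

Lemma bigmin_fwgap_le t : (1 <= t)%N -> reached t.+1 ->
  \big[Num.min/maxgap X (gradphi u g beta (uu 0%N)) (uu 0%N)]_(1 <= j < t.+2) fwgap j
  <= 6 * (sigma + 1) * beta * diam X ^+ 2 / t%:R.
Proof.
move=> t_ge1 Rt; rewrite -[_ * beta * _]mulrA.
suff [j jt le_j] : exists2 j, (0 < j < t.+2)%N & fwgap j <= 6 * (sigma + 1) * C / t%:R.
  by apply: (bigmin_inf_seq _ j) le_j; rewrite ?mem_index_iota.
have [t_le1|t_gt1] := leqP t 1.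
  have t1 : t = 1%N by apply/eqP; rewrite eqn_leq t_le1.
  subst t.
  exists 2%N => //; apply: le_trans (fwgap2_le Rt) _.
  by rewrite divr1; have := mulr_ge0 sigma_ge0 C_ge0; have := C_ge0; lra.
have t_gt0 : 0 < t%:R :> R by rewrite ltr0n.
have M_ge0 : 0 <= 6 * (sigma + 1) * C / t%:R.
  apply: divr_ge0; last exact: ltW.
  by have := mulr_ge0 sigma_ge0 C_ge0; have := C_ge0; lra.
have Mt : 6 * (sigma + 1) * C <= 6 * (sigma + 1) * C / t%:R * t%:R.
  by rewrite divfK ?gt_eqF.
have [j /andP[kj jt] le_M] := small_gap Rt t_gt1 M_ge0 Mt.
have j_gt0 : (0 < j)%N by apply: leq_ltn_trans kj.
exists j; first by rewrite j_gt0 ltnS ltnW.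
apply: le_trans (fwgap_le_gap _) _; first by apply: reached_le Rt _; rewrite j_gt0 ltnW.
by rewrite de_eqC.
Qed.

Lemma acgm_terminates : exists t, [/\ (1 <= t)%N,
  t%:R <= 1 + (Num.ceil ((7 * sigma + 6) * beta * diam X ^+ 2 / eta))%:~R :> R,
  reached t & stops t].
Proof.
set x := (7 * sigma + 6) * beta * diam X ^+ 2 / eta.
have x_ge0 : 0 <= x.
  apply: divr_ge0; last exact: ltW.
  by rewrite -mulrA; apply: mulr_ge0 => //; have := sigma_ge0; lra.
have c_ge0 : 0 <= Num.ceil x by rewrite ceil_ge0 (lt_le_trans _ x_ge0) ?ltrN10.
have c_ge : (7 * sigma + 6) * C <= eta * (Num.ceil x)%:~R.
  by have := ceil_ge x; rewrite /x ler_pdivrMr // -mulrA [eta * _]mulrC.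
move: (Num.ceil x) c_ge0 c_ge => c c_ge0 c_ge.
pose T := `|c|%N.+1.
have T_eq : T%:R = 1 + c%:~R :> R by rewrite -natr1 natr_absz ger0_norm // addrC.
have [[t [/andP[t_gt0 tT] Rt St]]|RT] := stops_or_reached u g beta eta de uu vv T.
  by exists t; split=> //; rewrite -T_eq ler_nat.
exfalso.
have [T_le1|T_gt1] := leqP T 1.
  have c0 : c = 0 by apply/eqP; rewrite -absz_eq0 -leqn0 -ltnS.
  have C0 : C = 0.
    by move: c_ge; rewrite c0 mulr0; have := mulr_ge0 sigma_ge0 C_ge0; have := C_ge0; lra.
  have D0 : diam X = 0.
    by move/eqP: C0; rewrite mulf_eq0 gt_eqF //= expf_eq0 => /eqP.
  have [R1 no_stop1] := reached_prev (j := 1) RT ltac:(by rewrite /T c0).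
  apply: no_stop1; rewrite /acgm_stops gap_eq0_of_diam_eq0 // de_eqC //.
  by rewrite C0 mulr0 mul0r subr0 ltW.
have Tc : 6 * (sigma + 1) * C <= eta * T%:R.
  by rewrite T_eq mulrDr mulr1; have := mulr_ge0 sigma_ge0 C_ge0; have := eta_gt0; lra.
have [j /andP[kj jT] le_eta] := small_gap RT T_gt1 (ltW eta_gt0) Tc.
have [_ no_stop] := reached_prev (j := j) RT ltac:(by rewrite (leq_ltn_trans _ kj)).
by apply: no_stop; rewrite /acgm_stops de_eqC ?(leq_ltn_trans _ kj) //; lra.
Qed.

End Rate.

End Run.

Theorem mainTheorem2 (R : realType) (n : nat) (X : set 'rV[R]_n)
  (u g : 'rV[R]_n) (beta eta : R)
  (de al : nat -> R) (uu vv : nat -> 'rV[R]_n) :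
  X !=set0 -> compact X -> convex_set X -> X u ->
  0 < beta -> 0 < eta ->
  acgm_run X u g beta eta de al uu vv ->
  (* termination guarantee: output u^+ = u^{t-1} *)
  (forall t, acgm_reached u g beta eta de uu vv t ->
     acgm_stops u g beta eta de uu vv t ->
     maxgap X (gradphi u g beta (uu t.-1)) (uu t.-1) <= eta)
  /\
  (forall sigma : R, 0 <= sigma ->
     (forall t, (1 <= t)%N -> de t = sigma * beta * diam X ^+ 2 / t%:R) ->
     (forall t, acgm_reached u g beta eta de uu vv t ->
        ~ acgm_stops u g beta eta de uu vv t ->
        phi u g beta (uu t) <=
        phi u g beta ((t.-1%:R / t.+1%:R) *: uu t.-1 + (2 / t.+1%:R) *: vv t)) ->
     (forall t, (1 <= t)%N -> acgm_reached u g beta eta de uu vv t.+1 ->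
        \big[Num.min/acgm_gap u g beta uu vv 1%N]_(1 <= j < t.+2)
           acgm_gap u g beta uu vv j
        <= \big[Num.min/maxgap X (gradphi u g beta (uu 0%N)) (uu 0%N)]_(1 <= j < t.+2)
             maxgap X (gradphi u g beta (uu j.-1)) (uu j.-1)
        /\
        \big[Num.min/maxgap X (gradphi u g beta (uu 0%N)) (uu 0%N)]_(1 <= j < t.+2)
             maxgap X (gradphi u g beta (uu j.-1)) (uu j.-1)
        <= 6 * (sigma + 1) * beta * diam X ^+ 2 / t%:R)
     /\
     exists t : nat,
       [/\ (1 <= t)%N,
           t%:R <= 1 + (Num.ceil ((7 * sigma + 6) * beta * diam X ^+ 2 / eta))%:~R :> R,
           acgm_reached u g beta eta de uu vv t
         & acgm_stops u g beta eta de uu vv t]).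
Proof.
move=> X_neq0 X_compact X_convex Xu beta_gt0 eta_gt0 run.
split=> [|sigma sigma_ge0 de_eq phi_step]; first exact (fwgap_le_eta_of_stops X_neq0 run).
split=> [t t_ge1 Rt|].
  split; first exact (bigmin_gap_le_bigmin_fwgap run Rt).
  exact (bigmin_fwgap_le X_neq0 X_compact X_convex Xu beta_gt0 run
           sigma_ge0 de_eq phi_step t_ge1 Rt).
exact (acgm_terminates X_compact X_convex Xu beta_gt0 eta_gt0 run
         sigma_ge0 de_eq phi_step).
Qed.
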